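(* For a set $\mathcal{R}$ of languages over $\Sigma$ let $\dot{\overline{\mathcal{R}}}=\{\Sigma^*\setminus L\mid L\in\mathcal{R}\}$ (point-wise complement). (1) There exists a rational set of regular languages $\mathcal{R}$ such that $\dot{\overline{\mathcal{R}}}$ is not a rational set of regular languages. (2) If $\mathcal{R}$ is a finite rational set of regular languages, then $\dot{\overline{\mathcal{R}}}$ is a finite rational set of regular languages. (3) In the finite case a modified language substitution is in general required: there exist an alphabet $\Delta$, a regular language substitution $\varphi:\Delta\to2^{\Sigma^*}$ and a regular $K\subseteq\Delta^+$ with $\mathcal{R}=(K,\varphi)$ finite, such that there is no regular $K'\subseteq\Delta^+$ with $\dot{\overline{\mathcal{R}}}=(K',\varphi)$.
   Context: Alphabets are nonempty finite sets. A regular language substitution $\varphi:\Delta\to2^{\Sigma^*}$ maps each symbol to a regular language over $\Sigma$, extended by $\varphi(\delta w)=\varphi(\delta)\varphi(w)$. A set $\mathcal{R}$ of regular languages over $\Sigma$ is a rational set of regular languages, written $\mathcal{R}=(K,\varphi)$, if there are an alphabet $\Delta$, a regular $K\subseteq\Delta^+$ and a regular language substitution $\varphi$ with $\mathcal{R}=\{\varphi(w)\mid w\in K\}$. *)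

From mathcomp Require Import all_boot.
From Stdlib Require Lists.List.
Set Implicit Arguments. Unset Strict Implicit. Unset Printing Implicit Defensive.

Definition lang (S : Type) := seq S -> Prop.

Definition regular (S : finType) (L : lang S) : Prop :=
  exists (Q : finType) (q0 : Q) (delta : Q -> S -> Q) (F : pred Q),
    forall w, L w <-> F (foldl delta q0 w).

Definition conc (S : Type) (L1 L2 : lang S) : lang S :=
  fun w => exists u v, w = u ++ v /\ L1 u /\ L2 v.
Definition eps_lang (S : Type) : lang S := fun w => w = [::].

Definition subst_word (D S : Type) (phi : D -> lang S) (w : seq D) : lang S :=
  foldr (fun d acc => conc (phi d) acc) (@eps_lang S) w.

Definition langset (S : Type) := lang S -> Prop.

(* Equality of sets of languages (languages compared by Leibniz equality). *)
Definition langset_eq (S : Type) (R1 R2 : langset S) : Prop :=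
  forall L, R1 L <-> R2 L.

Definition subst_image (D S : Type) (K : lang D) (phi : D -> lang S) : langset S :=
  fun L => exists w, K w /\ L = subst_word phi w.

Definition regular_subst (D S : finType) (phi : D -> lang S) : Prop :=
  forall d, regular (phi d).

Definition regular_plus (D : finType) (K : lang D) : Prop :=
  regular K /\ (forall w, K w -> w <> [::]).

Definition rational_set (S : finType) (R : langset S) : Prop :=
  exists (D : finType) (K : lang D) (phi : D -> lang S),
    0 < #|D| /\ regular_plus K /\ regular_subst phi /\
    langset_eq R (subst_image K phi).

Definition pw_compl (S : Type) (R : langset S) : langset S :=
  fun L => exists L0, R L0 /\ L = (fun w => ~ L0 w).

Definition finite_langset (S : Type) (R : langset S) : Prop :=
  exists s : seq (lang S), forall L, R L <-> Stdlib.Lists.List.In L s.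

From mathcomp Require Import all_boot zify.
From Stdlib Require Lists.List.
From Stdlib Require Import FunctionalExtensionality PropExtensionality ClassicalEpsilon.
Set Implicit Arguments. Unset Strict Implicit. Unset Printing Implicit Defensive.

(* (1) Over a one-letter alphabet take R = { a^[1, m+1] | m }, the image of 1 0^*
   under 1 |-> a, 0 |-> {eps, a}.  Its complements { eps } u a^{>= m+2} all
   contain eps; if phi(w) contains eps, then phi(d) is a subset of phi(w) for every
   letter d of w, so some letter of w has shortest nonempty word of length exactly
   m+2.  Infinitely many m would need infinitely many letters.
   (2) A finite set of regular languages is rational through one letter per
   member, and so is the finite set of their complements.
   (3) With phi(d) = Sigma^* every phi(w) contains eps, so none of them is the
   complement of Sigma^*, the empty language. *)

Lemma regular_ext (S : finType) (L1 L2 : lang S) :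
  regular L1 -> (forall w, L1 w <-> L2 w) -> regular L2.
Proof.
move=> [Q [q0 [d [F HL1]]]] E; exists Q, q0, d, F => w; rewrite -E; exact: HL1.
Qed.

Lemma regular_minn_size (S : finType) (k : nat) (P : pred nat) :
  regular (fun w : seq S => P (minn (size w) k)).
Proof.
pose step (q : 'I_k.+1) (_ : S) : 'I_k.+1 := inord (minn q.+1 k).
have run w (q : 'I_k.+1) : val (foldl step q w) = minn (q + size w) k.
  elim: w q => [|a w IHw] q /=; first by have := ltn_ord q; lia.
  rewrite IHw /step inordK; last by rewrite ltnS geq_minr.
  by have := ltn_ord q; lia.
by exists ('I_k.+1 : finType), ord0, step, (fun q : 'I_k.+1 => P q) => w; rewrite run.
Qed.

Lemma regular_eps (S : finType) : regular (@eps_lang S).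
Proof.
apply: regular_ext (regular_minn_size S 1 (eq_op^~ 0)) _ => w.
by rewrite /eps_lang; case: w.
Qed.

Lemma regular_letters (D : finType) (p : pred D) :
  regular (fun w : seq D => exists x, p x /\ w = [:: x]).
Proof.
pose step (q : option bool) (x : D) := Some (if q is None then p x else false).
have dead w : foldl step (Some false) w = Some false by elim: w.
exists (option bool : finType), None, step, (eq_op^~ (Some true)) => w.
case: w => [|a [|b w]] /=.
- by split=> // [[x []]].
- rewrite /step; split=> [[x [px [->]]]|/eqP [pa]]; first by rewrite px.
  by exists a.
- by rewrite dead; split=> // [[x []]].
Qed.

Lemma regular_plus_letters (D : finType) (p : pred D) :
  regular_plus (fun w : seq D => exists x, p x /\ w = [:: x]).
Proof. by split; [exact: regular_letters | move=> w [x [_ ->]]]. Qed.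

Lemma regular_compl (S : finType) (L : lang S) :
  regular L -> regular (fun w => ~ L w).
Proof.
move=> [Q [q0 [d [F HL]]]]; exists Q, q0, d, (predC F) => w.
by rewrite HL; split=> /negP.
Qed.

Lemma rcons_eq_cat (T : Type) (w u v : seq T) (a : T) :
  rcons w a = u ++ v <->
  (v = [::] /\ u = rcons w a) \/ (exists2 v', v = rcons v' a & w = u ++ v').
Proof.
split; last by case=> [[-> ->]|[v' -> ->]]; rewrite ?cats0 ?rcons_cat.
case/lastP: v => [|v' b]; first by rewrite cats0; left.
by rewrite -rcons_cat => /rcons_inj [-> ->]; right; exists v'.
Qed.

Section Concatenation.

Variables (S Q1 Q2 : finType) (q1 : Q1) (d1 : Q1 -> S -> Q1) (F1 : pred Q1).
Variables (q2 : Q2) (d2 : Q2 -> S -> Q2).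

(* The subset construction: the second component is the set of states the
   second automaton can be in after a split point accepted by the first one. *)
Definition conc_fresh (p : Q1) : {set Q2} := if F1 p then [set q2] else set0.

Definition conc_start : Q1 * {set Q2} := (q1, conc_fresh q1).

Definition conc_step (st : Q1 * {set Q2}) (a : S) : Q1 * {set Q2} :=
  let p := d1 st.1 a in (p, conc_fresh p :|: [set d2 x a | x in st.2]).

Lemma in_conc_fresh p x : (x \in conc_fresh p) = F1 p && (x == q2).
Proof. by rewrite /conc_fresh; case: (F1 p); rewrite ?inE. Qed.

Lemma conc_run_fst w : (foldl conc_step conc_start w).1 = foldl d1 q1 w.
Proof. by elim/last_ind: w => [|w a IHw] //; rewrite !foldl_rcons /= IHw. Qed.

Lemma conc_run_snd w x :
  x \in (foldl conc_step conc_start w).2 <->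
  exists u v, w = u ++ v /\ F1 (foldl d1 q1 u) /\ x = foldl d2 q2 v.
Proof.
elim/last_ind: w x => [|w a IHw] x.
  rewrite /= in_conc_fresh; split=> [/andP [Fq /eqP ->]|]; first by exists [::], [::].
  by case=> [[|? ?] [[|? ?] [//= _ [Fq ->]]]]; rewrite Fq eqxx.
rewrite foldl_rcons /= conc_run_fst in_setU in_conc_fresh; split.
  case/orP=> [/andP [Fq /eqP ->]|/imsetP [y /IHw [u [v [-> [Fu ->]]]] ->]].
    by exists (rcons w a), [::]; rewrite cats0 foldl_rcons.
  by exists u, (rcons v a); rewrite rcons_cat foldl_rcons.
case=> u [v [/rcons_eq_cat E [Fu ->]]].
case: E => [[-> Eu]|[v' -> Ew]].
  by move: Fu; rewrite Eu foldl_rcons => ->; rewrite eqxx.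
apply/orP; right; rewrite foldl_rcons.
by apply: (imset_f (d2^~ a)); apply/IHw; exists u, v'.
Qed.

End Concatenation.

Lemma regular_conc (S : finType) (A B : lang S) :
  regular A -> regular B -> regular (conc A B).
Proof.
move=> [Q1 [q1 [d1 [F1 HA]]]] [Q2 [q2 [d2 [F2 HB]]]].
exists (Q1 * {set Q2})%type, (conc_start q1 F1 q2), (conc_step d1 F1 q2 d2),
  (fun st : Q1 * {set Q2} => [exists x in st.2, F2 x]) => w.
split.
  move=> [u [v [Ew [Au Bv]]]]; apply/existsP; exists (foldl d2 q2 v).
  apply/andP; split; last exact/HB.
  by apply/conc_run_snd; exists u, v; rewrite -HA.
move/existsP=> [x /andP [/conc_run_snd [u [v [-> [Fu Ex]]]] Fx]].
by exists u, v; rewrite HA HB -Ex.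
Qed.

Lemma regular_subst_word (D S : finType) (phi : D -> lang S) w :
  regular_subst phi -> regular (subst_word phi w).
Proof.
by move=> Hphi; elim: w => [|d w IHw] /=; [exact: regular_eps | exact: regular_conc].
Qed.

Lemma subst_word1 (D S : Type) (phi : D -> lang S) d : subst_word phi [:: d] = phi d.
Proof.
apply: functional_extensionality => w; apply: propositional_extensionality.
split=> [[u [v [-> [phi_u ->]]]]|phi_w]; first by rewrite cats0.
by exists w, [::]; rewrite cats0.
Qed.

Lemma subst_word_nil (D S : Type) (phi : D -> lang S) w :
  (forall d, phi d [::]) -> subst_word phi w [::].
Proof. by move=> Hphi; elim: w => [|d w IHw] //=; exists [::], [::]. Qed.

Lemma subst_word_letter_sub (D S : finType) (phi : D -> lang S) w d v :
  subst_word phi w [::] -> d \in w -> phi d v -> subst_word phi w v.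
Proof.
elim: w => [|e w IHw] //= [[|? ?] [[|? ?] [//= _ [phi_e nil_w]]]].
rewrite in_cons => /orP [/eqP -> phi_v|w_d phi_v]; first by exists v, [::]; rewrite cats0.
by exists [::], v; split; last split; last exact: IHw.
Qed.

Lemma subst_word_nonempty (D S : finType) (phi : D -> lang S) w u :
  subst_word phi w u -> 0 < size u ->
  exists2 d, d \in w & exists v, [/\ phi d v, 0 < size v & size v <= size u].
Proof.
elim: w u => [|e w IHw] u /=; first by move=> ->.
move=> [[|a x] [y [-> [phi_x w_y]]]] u_gt0.
  by have [d w_d hv] := IHw y w_y u_gt0; exists d; rewrite // in_cons w_d orbT.
by exists e; [rewrite mem_head | exists (a :: x); rewrite size_cat leq_addr].
Qed.

Definition min_nonempty_size (S : Type) (L : lang S) (n : nat) : Prop :=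
  [/\ 0 < n, exists2 v, L v & size v = n & forall v, L v -> 0 < size v -> n <= size v].

Lemma min_nonempty_size_unique (S : Type) (L : lang S) m n :
  min_nonempty_size L m -> min_nonempty_size L n -> m = n.
Proof.
move=> [m_gt0 [u Lu su] min_m] [n_gt0 [v Lv sv] min_n].
have := min_m v Lv; have := min_n u Lu; rewrite su sv => /(_ m_gt0) + /(_ n_gt0).
lia.
Qed.

(* Every letter of [w] contributes a subset of [phi(w)] because [phi(w)]
   contains the empty word. *)
Lemma subst_word_min_nonempty_size (D S : finType) (phi : D -> lang S) w n :
  subst_word phi w [::] -> min_nonempty_size (subst_word phi w) n ->
  exists d, min_nonempty_size (phi d) n.
Proof.
move=> nil_w [n_gt0 [u phi_u su] min_w].
have u_gt0 : 0 < size u by rewrite su.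
have [d w_d [v [phi_v v_gt0 sv]]] := subst_word_nonempty phi_u u_gt0.
have min_d v' : phi d v' -> 0 < size v' -> n <= size v'.
  by move=> phi_v'; apply/min_w/(subst_word_letter_sub nil_w w_d).
exists d; split=> //; exists v => //.
by have := min_d v phi_v v_gt0; lia.
Qed.

Lemma rational_set_regular (S : finType) (R : langset S) L :
  rational_set R -> R L -> regular L.
Proof.
move=> [D [K [phi [_ [_ [Hphi HR]]]]]] /HR [w [_ ->]]; exact: regular_subst_word.
Qed.

Lemma no_nat_injection (D : finType) (f : nat -> D) : ~ injective f.
Proof.
move=> f_inj; pose g (i : 'I_#|D|.+1) := f i.
have g_inj : injective g by move=> i j /f_inj; apply: ord_inj.
by have := leq_card g g_inj; rewrite card_ord ltnn.
Qed.

Definition len1_or_le1 (b : bool) : lang unit :=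
  if b then (fun w => size w = 1) else (fun w => size w <= 1).

Definition true_nseq_false (w : seq bool) : Prop := exists m, w = true :: nseq m false.

Lemma subst_len1_or_le1_nseq m u :
  subst_word len1_or_le1 (nseq m false) u <-> size u <= m.
Proof.
elim: m u => [|m IHm] u /=; first by rewrite leqn0 size_eq0; split=> [->|/eqP].
split=> [[x [y [-> [/= sx /IHm sy]]]]|]; first by rewrite size_cat; lia.
case: u => [|a u] su; first by exists [::], [::]; rewrite IHm.
by exists [:: a], u; rewrite IHm.
Qed.

Lemma subst_len1_or_le1 m u :
  subst_word len1_or_le1 (true :: nseq m false) u <-> 0 < size u <= m.+1.
Proof.
split=> [[x [y [-> [/= sx /subst_len1_or_le1_nseq sy]]]]|]; first by rewrite size_cat; lia.
by case: u => [|a u] // su; exists [:: a], u; rewrite subst_len1_or_le1_nseq.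
Qed.

Lemma regular_subst_len1_or_le1 : regular_subst len1_or_le1.
Proof.
case.
  apply: regular_ext (regular_minn_size unit 2 (eq_op^~ 1)) _ => w /=.
  by case: w => [|? [|? ?]]; split=> /eqP.
by apply: regular_ext (regular_minn_size unit 2 (leq^~ 1)) _ => - [|? [|? ?]].
Qed.

Lemma regular_plus_true_nseq_false : regular_plus true_nseq_false.
Proof.
split; last by move=> w [m ->].
pose step (q : option bool) (b : bool) : option bool :=
  Some (if q is Some c then c && ~~ b else b).
have dead w : foldl step (Some false) w = Some false by elim: w.
have live w : foldl step (Some true) w = Some true <-> exists m, w = nseq m false.
  elim: w => [|[] w IHw] /=; first by split=> // _; exists 0.
    by rewrite dead; split=> // [[[|m]]].
  rewrite IHw; split=> [[m ->]|[[|m] //= [->]]]; first by exists m.+1.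
  by exists m.
exists (option bool : finType), None, step, (eq_op^~ (Some true)) => w.
case: w => [|[] w] /=; rewrite ?dead; try by split=> // [[m]].
by rewrite /true_nseq_false; split=> [[m [->]]|/eqP /live [m ->]];
  [apply/eqP/live; exists m | exists m].
Qed.

Lemma rational_len1_or_le1 :
  rational_set (subst_image true_nseq_false len1_or_le1).
Proof.
exists bool, true_nseq_false, len1_or_le1; split; first by rewrite card_bool.
by split; [exact: regular_plus_true_nseq_false | split; [exact: regular_subst_len1_or_le1 |]].
Qed.

Lemma not_rational_pw_compl_len1_or_le1 :
  ~ rational_set (pw_compl (subst_image true_nseq_false len1_or_le1)).
Proof.
move=> [D [K [phi [_ [_ [_ HR]]]]]].
have letter m : exists d, min_nonempty_size (phi d) m.+2.
  pose L u := ~ subst_word len1_or_le1 (true :: nseq m false) u.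
  have [w [_ EL]] : subst_image K phi L.
    apply/HR; exists (subst_word len1_or_le1 (true :: nseq m false)); split=> //.
    by exists (true :: nseq m false); split=> //; exists m.
  have phi_w u : subst_word phi w u <-> ~ (0 < size u <= m.+1).
    by rewrite -EL /L subst_len1_or_le1.
  apply: (subst_word_min_nonempty_size (w := w)); first exact/phi_w.
  split=> //; first by exists (nseq m.+2 tt); rewrite ?phi_w size_nseq //; lia.
  by move=> v /phi_w; lia.
pose f m := proj1_sig (constructive_indefinite_description _ (letter m)).
apply: (@no_nat_injection D f) => m n; rewrite /f.
case: constructive_indefinite_description => d m_d.
case: constructive_indefinite_description => e n_e /= Ede; move: m_d; rewrite Ede.
by move=> /(min_nonempty_size_unique n_e) [].
Qed.

Lemma rational_set_eq (S : finType) (R1 R2 : langset S) :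
  langset_eq R1 R2 -> rational_set R2 -> rational_set R1.
Proof.
move=> E [D [K [phi [D_gt0 [HK [Hphi HR]]]]]]; exists D, K, phi.
by do 3!split=> //; move=> L; rewrite E.
Qed.

(* Letter [i < n] stands for the [i]-th member; the extra letter [n] keeps the
   alphabet nonempty when [s] is empty. *)
Lemma rational_set_seq (S : finType) (s : seq (lang S)) :
  (forall L, List.In L s -> regular L) -> rational_set (fun L => List.In L s).
Proof.
move=> s_reg; pose n := length s.
pose phi (i : 'I_n.+1) := List.nth i s (fun _ => False).
have phi_reg : regular_subst phi.
  move=> i; rewrite /phi; case: (ltnP i n) => [/ltP|/leP] i_n.
    exact/s_reg/List.nth_In.
  rewrite List.nth_overflow //.
  exact: regular_ext (regular_minn_size S 0 pred0) _.
exists ('I_n.+1 : finType), (fun w => exists i : 'I_n.+1, i < n /\ w = [:: i]), phi.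
split; first by rewrite card_ord.
split; first exact: regular_plus_letters (fun i : 'I_n.+1 => i < n).
split=> // L; split=> [s_L|[w [[i [/ltP i_n ->]] ->]]].
  have [i [/ltP i_n <-]] := List.In_nth s L (fun _ => False) s_L.
  have i_lt : i < n.+1 by rewrite ltnS ltnW.
  by exists [:: Ordinal i_lt]; rewrite subst_word1; split=> //; exists (Ordinal i_lt).
by rewrite subst_word1; exact: List.nth_In.
Qed.

Lemma pw_compl_seq (S : Type) (R : langset S) (s : seq (lang S)) :
  (forall L, R L <-> List.In L s) ->
  langset_eq (pw_compl R) (fun L => List.In L (List.map (fun L0 w => ~ L0 w) s)).
Proof.
move=> Rs L; split=> [[L0 [/Rs s_L0 ->]]|/List.in_map_iff [L0 [<- s_L0]]].
  exact: List.in_map.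
by exists L0; rewrite Rs.
Qed.

Lemma rational_finite_pw_compl (S : finType) (R : langset S) :
  rational_set R -> finite_langset R ->
  rational_set (pw_compl R) /\ finite_langset (pw_compl R).
Proof.
move=> R_rat [s Rs]; have E := pw_compl_seq Rs.
split; last by exists (List.map (fun L0 w => ~ L0 w) s).
apply: rational_set_eq E _.
apply: rational_set_seq => L /List.in_map_iff [L0 [<- /Rs R_L0]].
exact/regular_compl/(rational_set_regular R_rat).
Qed.

Definition full_lang (S : Type) : lang S := fun _ => True.

Lemma regular_full (S : finType) : regular (@full_lang S).
Proof. exact: regular_ext (regular_minn_size S 0 predT) _. Qed.

Lemma no_subst_image_pw_compl_full (D S : finType) (phi : D -> lang S)
    (K K' : lang D) :
  (forall d, phi d [::]) -> subst_image K phi (@full_lang S) ->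
  ~ langset_eq (pw_compl (subst_image K phi)) (subst_image K' phi).
Proof.
move=> phi_nil K_full E.
have [w [_ Ew]] : subst_image K' phi (fun w => ~ full_lang w).
  by apply/E; exists (@full_lang S).
by have := subst_word_nil w phi_nil; rewrite -Ew; apply.
Qed.

Theorem proposition4 :
  (exists (S : finType) (R : langset S),
      0 < #|S| /\ rational_set R /\ ~ rational_set (pw_compl R)) /\
  (forall (S : finType) (R : langset S),
      0 < #|S| -> rational_set R -> finite_langset R ->
      rational_set (pw_compl R) /\ finite_langset (pw_compl R)) /\
  (exists (S D : finType) (phi : D -> lang S) (K : lang D),
      0 < #|S| /\ 0 < #|D| /\ regular_subst phi /\ regular_plus K /\
      finite_langset (subst_image K phi) /\
      ~ (exists K' : lang D, regular_plus K' /\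
           langset_eq (pw_compl (subst_image K phi)) (subst_image K' phi))).
Proof.
split.
  exists unit, (subst_image true_nseq_false len1_or_le1); rewrite card_unit.
  by split; [|split; [exact: rational_len1_or_le1 | exact: not_rational_pw_compl_len1_or_le1]].
split; first by move=> S R _; exact: rational_finite_pw_compl.
pose K (w : seq unit) := exists x, predT x /\ w = [:: x].
have K_full : subst_image K (fun _ => @full_lang unit) (@full_lang unit).
  by exists [:: tt]; rewrite subst_word1; split=> //; exists tt.
exists unit, unit, (fun _ => @full_lang unit), K; rewrite card_unit.
do 2!split=> //; split; first by move=> _; exact: regular_full.
split; first exact: regular_plus_letters.
split; last by move=> [K' [_]]; exact: no_subst_image_pw_compl_full.
exists [:: @full_lang unit] => L; split=> [[w [[[] [_ ->]] ->]]|[<-|[]]] //.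
by rewrite subst_word1; left.
Qed.
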